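(* Let $R\subset\mathbb N$ be such that for every minimal distal system $(X,T)$ and every $x\in X$ one has $\inf_{n\in R} d(T^nx,x)=0$. Then for every minimal distal system $(X,T)$, every $x\in X$ and every $\ell\ge1$ one has $\inf_{n\in R}\max_{1\le j\le\ell} d(T^{jn}x,x)=0$.
   Context: A system is a compact metric space $X$ with a homeomorphism $T$; minimal means no proper nonempty closed invariant subset. It is distal if $\inf_{n\in\mathbb Z} d(T^nx,T^nx')>0$ for all $x\ne x'$. *)

From Stdlib Require Import Reals List ZArith.
Open Scope R_scope.

Record MetricSpace : Type := {
  carrier :> Type;
  mdist : carrier -> carrier -> R;
  dist_nonneg : forall x y, 0 <= mdist x y;
  dist_eq0 : forall x y, mdist x y = 0 <-> x = y;
  dist_sym : forall x y, mdist x y = mdist y x;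
  dist_tri : forall x y z, mdist x z <= mdist x y + mdist y z
}.

Definition is_open {X : MetricSpace} (U : X -> Prop) : Prop :=
  forall x, U x -> exists r, 0 < r /\ forall y, mdist X x y < r -> U y.

Definition is_closed {X : MetricSpace} (A : X -> Prop) : Prop :=
  is_open (fun x => ~ A x).

Definition compact (X : MetricSpace) : Prop :=
  forall (I : Type) (U : I -> X -> Prop),
    (forall i, is_open (U i)) ->
    (forall x, exists i, U i x) ->
    exists l : list I, forall x, exists i, In i l /\ U i x.

Definition continuous {X : MetricSpace} (f : X -> X) : Prop :=
  forall x eps, 0 < eps -> exists delta, 0 < delta /\
    forall y, mdist X x y < delta -> mdist X (f x) (f y) < eps.

Record System : Type := {
  space :> MetricSpace;
  space_compact : compact space;
  T : space -> space;
  Tinv : space -> space;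
  T_cont : continuous T;
  Tinv_cont : continuous Tinv;
  T_Tinv : forall x, T (Tinv x) = x;
  Tinv_T : forall x, Tinv (T x) = x
}.

Definition iterN (S : System) (n : nat) (x : S) : S := Nat.iter n (T S) x.

Definition iterZ (S : System) (n : Z) (x : S) : S :=
  match n with
  | Z0 => x
  | Zpos p => Nat.iter (Pos.to_nat p) (T S) x
  | Zneg p => Nat.iter (Pos.to_nat p) (Tinv S) x
  end.

Definition minimal (S : System) : Prop :=
  forall A : S -> Prop,
    is_closed A ->
    (forall x, A x <-> A (T S x)) ->
    (exists x, A x) ->
    forall x, A x.

Definition distal (S : System) : Prop :=
  forall x x' : S, x <> x' ->
    exists eps, 0 < eps /\ forall n : Z, eps <= mdist S (iterZ S n x) (iterZ S n x').

(** inf_{n in R} f n = 0 for a nonnegative f (written out). *)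
Definition inf_zero_on (Rset : nat -> Prop) (f : nat -> R) : Prop :=
  forall eps, 0 < eps -> exists n, Rset n /\ f n < eps.

Fixpoint max_ret (Sy : System) (x : Sy) (n : nat) (l : nat) : R :=
  match l with
  | O => 0
  | Datatypes.S l' =>
      Rmax (max_ret Sy x n l') (mdist Sy (iterN Sy (Datatypes.S l' * n) x) x)
  end.

(* In a distal system every orbit closure is minimal: if p-lim T^n x = y for an ultrafilter p on Z,
   take (Ellis) an idempotent u = r + p in the closed left ideal beta Z + p of the Stone-Cech
   semigroup; then u-lim T^n x and x are proximal, hence equal by distality, so r-lim T^n y = x.
   Apply this to the diagonal action z |-> (T z_1, T^2 z_2, ..., T^l z_l) on X^l, which is distal:
   the orbit closure of (x, ..., x) is a minimal distal system, and in the sup metric the distance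
   from T^n (x, ..., x) to (x, ..., x) is max_(j <= l) d(T^(jn) x, x). *)

From Pilot Require Import Defs.
From Stdlib Require Import Reals List ZArith Lra Lia Classical IndefiniteDescription
  FunctionalExtensionality PropExtensionality ProofIrrelevance.
From mathcomp Require Import classical_sets filter.
Open Scope R_scope.
Local Open Scope classical_set_scope.

(** * Ultrafilters and ultrafilter limits *)

Lemma sig_ext {U : Type} {P : U -> Prop} (a b : {x | P x}) : proj1_sig a = proj1_sig b -> a = b.
Proof. apply eq_sig_hprop. intros x; apply proof_irrelevance. Qed.

Definition fip {I : Type} (G : set_system I) : Prop :=
  forall l : list (set I), (forall A, In A l -> G A) -> exists i, forall A, In A l -> A i.

Lemma filter_list_inter {I : Type} (p : set_system I) {FF : Filter p} (l : list (set I)) :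
  (forall A, In A l -> p A) -> p (fun i => forall A, In A l -> A i).
Proof.
  induction l as [|A l IH]; intros Hl.
  - apply (filterS (P := setT)); [intros i _ B []|apply filterT].
  - apply (filterS (P := A `&` (fun i => forall B, In B l -> B i))).
    + intros i [HA Hi] B [<-|HB]; [exact HA|exact (Hi B HB)].
    + apply filterI; [apply Hl; left; reflexivity|apply IH; intros; apply Hl; right; auto].
Qed.

Lemma ultra_of_fip {I : Type} (G : set_system I) :
  fip G -> exists p, UltraFilter p /\ forall A, G A -> p A.
Proof.
  intros HG.
  set (gen := fun B : set I => exists l, (forall A, In A l -> G A) /\
                 forall i, (forall A, In A l -> A i) -> B i).
  assert (Pgen : ProperFilter gen).
  { apply Build_ProperFilter_ex.
    - intros B [l [Gl Hl]]. destruct (HG l Gl) as [i Hi]. eauto.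
    - constructor.
      + exists nil. split; [intros A []|]. intros; exact Logic.I.
      + intros B C [l1 [G1 H1]] [l2 [G2 H2]]. exists (l1 ++ l2). split.
        * intros A HA; apply in_app_or in HA as [HA|HA]; auto.
        * intros i Hi; split; [apply H1|apply H2]; intros A HA; apply Hi, in_or_app; auto.
      + intros B C BC [l [Gl Hl]]. exists l; split; auto. }
  destruct (ultraFilterLemma Pgen) as [p [Up Hp]].
  exists p; split; [exact Up|]. intros A GA. apply Hp. exists (A :: nil). split.
  - intros B [<-|[]]; exact GA.
  - intros i Hi; apply Hi; left; reflexivity.
Qed.

Lemma filter_meet {I : Type} (p : set_system I) {FF : ProperFilter p} (A B : set I) :
  p A -> p B -> exists i, A i /\ B i.
Proof. intros HA HB. exact (filter_ex (F := p) (filterI (F := p) HA HB)). Qed.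

Lemma ultra_not_both {I : Type} (p : set_system I) {FF : ProperFilter p} (A : set I) :
  p A -> ~ p (fun i => ~ A i).
Proof. intros HA HnA. destruct (filter_meet p _ _ HA HnA) as [i [Ai nAi]]. auto. Qed.

Lemma ultra_of_compl {I : Type} (p : set_system I) :
  ProperFilter p -> (forall A, p A \/ p (fun i => ~ A i)) -> UltraFilter p.
Proof.
  intros Pp Hc. split; [exact Pp|]. intros q Pq pq.
  apply functional_extensionality; intro A. apply propositional_extensionality; split; [|apply pq].
  intros qA. destruct (Hc A) as [h|h]; [exact h|].
  exfalso. exact (ultra_not_both q A qA (pq _ h)).
Qed.

Definition ulim {M : MetricSpace} {I : Type} (p : set_system I) (f : I -> M) (a : M) : Prop :=
  forall e, 0 < e -> p (fun i => mdist M (f i) a < e).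

Lemma ulim_unique {M : MetricSpace} {I : Type} (p : set_system I) {FF : ProperFilter p}
  (f : I -> M) (a b : M) : ulim p f a -> ulim p f b -> a = b.
Proof.
  intros Ha Hb. apply Defs.dist_eq0. apply NNPP; intro hne.
  assert (hab : 0 < mdist M a b) by (pose proof (Defs.dist_nonneg M a b); lra).
  destruct (filter_meet p _ _ (Ha (mdist M a b / 2) ltac:(lra)) (Hb (mdist M a b / 2) ltac:(lra))) as [i [h1 h2]].
  pose proof (Defs.dist_tri M a (f i) b). rewrite (Defs.dist_sym M a (f i)) in H. lra.
Qed.

Lemma ball_open {M : MetricSpace} (a : M) (r : R) : is_open (fun y => mdist M a y < r).
Proof.
  intros y hy. exists (r - mdist M a y). split; [lra|].
  intros z hz. pose proof (Defs.dist_tri M a y z). lra.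
Qed.

Lemma closed_of_approx {M : MetricSpace} (A : M -> Prop) (w : M) : is_closed A ->
  (forall e, 0 < e -> exists v, A v /\ mdist M v w < e) -> A w.
Proof.
  intros Acl Hw. apply NNPP; intro nA. destruct (Acl w nA) as [r [hr Hr]].
  destruct (Hw r hr) as [v [Av hv]]. apply (Hr v); [rewrite Defs.dist_sym; exact hv|exact Av].
Qed.

Lemma ulim_exists {M : MetricSpace} {I : Type} (p : set_system I) (f : I -> M) :
  Defs.compact M -> UltraFilter p -> exists a, ulim p f a.
Proof.
  intros C Up. apply NNPP; intro hn.
  assert (far : forall a, exists e, 0 < e /\ p (fun i => ~ mdist M (f i) a < e)).
  { intros a. apply NNPP; intro h. apply hn. exists a. intros e he.
    destruct (in_ultra_setVsetC (fun i => mdist M (f i) a < e) Up) as [h'|h']; [exact h'|].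
    exfalso; apply h; exists e; auto. }
  set (Ix := {a : M & {e : R | 0 < e /\ p (fun i => ~ mdist M (f i) a < e)}}).
  destruct (C Ix (fun c y => mdist M (projT1 c) y < proj1_sig (projT2 c))) as [l Hl].
  - intros c. apply ball_open.
  - intros a. destruct (far a) as [e [he hp]].
    exists (existT _ a (exist _ e (conj he hp))). simpl.
    rewrite (proj2 (Defs.dist_eq0 M a a) eq_refl). exact he.
  - set (avoid := fun (c : Ix) i => ~ mdist M (f i) (projT1 c) < proj1_sig (projT2 c)).
    assert (hp : p (fun i => forall A, In A (map avoid l) -> A i)).
    { apply (filter_list_inter p). intros A HA. apply in_map_iff in HA as [[a [e [he hpa]]] [<- _]].
      exact hpa. }
    destruct (filter_ex (F := p) hp) as [i Hi].
    destruct (Hl (f i)) as [c [cin hc]].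
    apply (Hi _ (in_map _ _ _ cin)). rewrite Defs.dist_sym; exact hc.
Qed.

Lemma compact_of_ulim (M : MetricSpace) :
  (forall p : set_system M, UltraFilter p -> exists a, ulim p (fun y => y) a) -> Defs.compact M.
Proof.
  intros H Ix U Uopen Ucover. apply NNPP; intro hn.
  set (uncovered := fun V : set M =>
         exists l : list Ix, forall y, (forall i, In i l -> ~ U i y) -> V y).
  destruct (ultra_of_fip uncovered) as [p [Up Hp]].
  - intros ls Hls.
    assert (Hl : exists l : list Ix, forall y, (forall i, In i l -> ~ U i y) -> forall A, In A ls -> A y).
    { clear hn. induction ls as [|A ls IH].
      - exists nil; intros y _ A [].
      - destruct IH as [l1 H1]; [intros; apply Hls; right; auto|].
        destruct (Hls A (or_introl eq_refl)) as [l2 H2].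
        exists (l1 ++ l2). intros y hy B [<-|HB].
        + apply H2; intros i hi; apply hy, in_or_app; auto.
        + apply H1; auto. intros i hi; apply hy, in_or_app; auto. }
    destruct Hl as [l Hl].
    apply NNPP; intro hne. apply hn. exists l. intros x.
    apply NNPP; intro hx. apply hne. exists x. apply Hl. intros i hi hu. apply hx; eauto.
  - destruct (H p Up) as [a Ha].
    destruct (Ucover a) as [i Ui]. destruct (Uopen i a Ui) as [r [hr hU]].
    assert (outside : p (fun y => ~ U i y)).
    { apply Hp. exists (i :: nil). intros y hy; apply hy; left; reflexivity. }
    destruct (filter_meet p _ _ outside (Ha r hr)) as [y [h1 h2]].
    apply h1, hU. rewrite Defs.dist_sym; exact h2.
Qed.

Lemma ulim_of_cluster {M : MetricSpace} {I : Type} (f : I -> M) (a : M) :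
  (forall e, 0 < e -> exists i, mdist M (f i) a < e) -> exists p, UltraFilter p /\ ulim p f a.
Proof.
  intros H.
  set (near := fun A : set I => exists e, 0 < e /\ forall i, mdist M (f i) a < e -> A i).
  destruct (ultra_of_fip near) as [p [Up Hp]].
  - intros l Hl.
    assert (He : exists e, 0 < e /\ forall i, mdist M (f i) a < e -> forall A, In A l -> A i).
    { induction l as [|A l IH].
      - exists 1; split; [lra|]. intros i _ A [].
      - destruct IH as [e1 [h1 H1]]; [intros; apply Hl; right; auto|].
        destruct (Hl A (or_introl eq_refl)) as [e2 [h2 H2]].
        exists (Rmin e1 e2). split; [apply Rmin_pos; auto|].
        intros i hi B [<-|HB].
        + apply H2. pose proof (Rmin_r e1 e2); lra.
        + apply H1; auto. pose proof (Rmin_l e1 e2); lra. }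
    destruct He as [e [he Hi]]. destruct (H e he) as [i hi]. exists i; apply Hi; exact hi.
  - exists p; split; [exact Up|]. intros e he. apply Hp. exists e; auto.
Qed.

(** * The semigroup beta Z and Ellis idempotents *)

Definition uadd (p q : set_system Z) : set_system Z :=
  fun A => p (fun n => q (fun m => A (n + m)%Z)).

Lemma uadd_ultra (p q : set_system Z) : UltraFilter p -> UltraFilter q -> UltraFilter (uadd p q).
Proof.
  intros Up Uq. unfold uadd. apply ultra_of_compl.
  - apply Build_ProperFilter_ex.
    + intros A h. destruct (filter_ex (F := p) h) as [n hn].
      destruct (filter_ex (F := q) hn) as [m hm]. eauto.
    + constructor.
      * apply (filterS (F := p) (P := setT)); [intros n _; apply (filterT (F := q))|apply filterT].
      * intros A B hA hB. apply (filterS (F := p) (P := _ `&` _) (fun n h => filterI (F := q) (proj1 h) (proj2 h))).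
        exact (filterI hA hB).
      * intros A B AB. apply filterS. intros n. apply filterS. intros m; apply AB.
  - intros A. destruct (in_ultra_setVsetC (fun n => q (fun m => A (n + m)%Z)) Up) as [h|h];
      [left; exact h|right].
    apply (filterS (F := p) (P := ~` (fun n => q (fun m => A (n + m)%Z)))); [|exact h]. intros n hn.
    destruct (in_ultra_setVsetC (fun m => A (n + m)%Z) Uq) as [h'|h']; [contradiction|exact h'].
Qed.

Lemma uadd_assoc (p q r : set_system Z) : uadd (uadd p q) r = uadd p (uadd q r).
Proof.
  apply functional_extensionality; intro A. unfold uadd.
  f_equal; apply functional_extensionality; intro n.
  f_equal; apply functional_extensionality; intro m.
  f_equal; apply functional_extensionality; intro k.
  rewrite Z.add_assoc. reflexivity.
Qed.

Definition ultra_on (F : set_system Z) (q : set_system Z) : Prop :=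
  UltraFilter q /\ forall A, F A -> q A.

(* [ultra_on F] is the closed subset of beta Z cut out by F; every closed subset is of this form. *)
Definition closed_subsemigroup (F : set_system Z) : Prop :=
  (exists q, ultra_on F q) /\
  forall q1 q2, ultra_on F q1 -> ultra_on F q2 -> ultra_on F (uadd q1 q2).

(* Right translation by u is continuous, so it maps the compact set [ultra_on H] onto a closed set. *)
Lemma uadd_r_image (H : set_system Z) (u q : set_system Z) : UltraFilter u -> UltraFilter q ->
  (forall A, (forall s, ultra_on H s -> uadd s u A) -> q A) ->
  exists s, ultra_on H s /\ q = uadd s u.
Proof.
  intros Uu Uq Hq.
  set (G := fun B : set Z => H B \/ exists C, q C /\ forall n, u (fun m => C (n + m)%Z) -> B n).
  assert (HG : fip G).
  { intros l Hl.
    assert (Hsplit : exists l1 C, (forall B, In B l1 -> H B) /\ q C /\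
      forall n, (forall B, In B l1 -> B n) -> u (fun m => C (n + m)%Z) -> forall A, In A l -> A n).
    { induction l as [|A l IH].
      - exists nil, setT. split; [intros B []|]. split; [apply filterT|]. intros n _ _ A [].
      - destruct IH as (l1 & C & H1 & qC & HC); [intros; apply Hl; right; auto|].
        destruct (Hl A (or_introl eq_refl)) as [hA|(C' & qC' & HC')].
        + exists (A :: l1), C. split; [intros B [<-|HB]; auto|]. split; [exact qC|].
          intros n hn hu B [<-|HB]; [apply hn; left; reflexivity|].
          apply HC; auto. intros; apply hn; right; auto.
        + exists l1, (C `&` C'). split; [exact H1|]. split; [exact (filterI qC qC')|].
          intros n hn hu B [<-|HB].
          * apply HC'. exact (filterS (fun m h => proj2 h) hu).
          * apply HC; auto. exact (filterS (fun m h => proj1 h) hu). }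
    destruct Hsplit as (l1 & C & H1 & qC & HC).
    apply NNPP; intro hno.
    assert (qnC : q (fun k => ~ C k)).
    { apply Hq. intros s [Us Hs]. unfold uadd.
      apply (filterS (F := s) (P := fun n => forall B, In B l1 -> B n));
        [|apply (filter_list_inter s); auto].
      intros n hn. destruct (in_ultra_setVsetC (fun m => C (n + m)%Z) Uu) as [h|h]; [|exact h].
      exfalso; apply hno; exists n; apply HC; auto. }
    exact (ultra_not_both q C qC qnC). }
  destruct (ultra_of_fip G HG) as [s [Us Hs]].
  assert (Usu := uadd_ultra s u Us Uu).
  exists s. split; [split; [exact Us|intros B HB; apply Hs; left; exact HB]|].
  symmetry. apply (max_filter (F := q)); [exact _|].
  intros C qC. apply Hs. right. exists C; split; [exact qC|]. intros n h; exact h.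
Qed.

Lemma chain_list_bound {T : Type} (C : set (set T)) (G : set T) (l : list T) :
  total_on C subset ->
  (forall a, In a l -> G a \/ (\bigcup_(X in C) X) a) ->
  (forall a, In a l -> G a) \/ exists2 X, C X & forall a, In a l -> G a \/ X a.
Proof.
  intros Ctot. induction l as [|b l IH]; intros Hl.
  - left; intros a [].
  - assert (Hb := Hl b (or_introl eq_refl)).
    destruct IH as [Gl|[X CX HX]]; [intros a ha; apply Hl; right; exact ha| |].
    + destruct Hb as [Gb|[Y CY Yb]].
      * left; intros a [<-|ha]; [exact Gb|exact (Gl a ha)].
      * right; exists Y; [exact CY|]. intros a [<-|ha]; [right; exact Yb|left; exact (Gl a ha)].
    + destruct Hb as [Gb|[Y CY Yb]].
      * right; exists X; [exact CX|]. intros a [<-|ha]; [left; exact Gb|exact (HX a ha)].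
      * destruct (Ctot X Y CX CY) as [XY|YX].
        -- right; exists Y; [exact CY|]. intros a [<-|ha]; [right; exact Yb|].
           destruct (HX a ha) as [h|h]; [left; exact h|right; exact (XY a h)].
        -- right; exists X; [exact CX|]. intros a [<-|ha]; [right; exact (YX b Yb)|exact (HX a ha)].
Qed.

Lemma ultra_on_mono (F G : set_system Z) (q : set_system Z) :
  F `<=` G -> ultra_on G q -> ultra_on F q.
Proof. intros FG [Uq Hq]. split; [exact Uq|]. intros A hA; exact (Hq A (FG A hA)). Qed.

Lemma closed_subsemigroup_chain (F : set_system Z) (C : set (set_system Z)) :
  closed_subsemigroup F -> (forall X, C X -> closed_subsemigroup (F `|` X)) ->
  total_on C subset -> closed_subsemigroup (F `|` \bigcup_(X in C) X).
Proof.
  intros [[q0 [U0 H0]] HF] HC Ctot. split.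
  - apply ultra_of_fip. intros l Hl.
    destruct (chain_list_bound C F l Ctot Hl) as [Fl|[X CX HX]].
    + exact (filter_ex (F := q0) (filter_list_inter q0 l (fun A hA => H0 A (Fl A hA)))).
    + destruct (HC X CX) as [[q [Uq Hq]] _].
      exact (filter_ex (F := q) (filter_list_inter q l (fun A hA => Hq A (HX A hA)))).
  - intros q1 q2 H1 H2. split; [exact (uadd_ultra q1 q2 (proj1 H1) (proj1 H2))|].
    intros A [hA|[X CX hX]].
    + apply (proj2 (HF q1 q2 (ultra_on_mono _ _ _ (fun B hB => or_introl hB) H1)
                             (ultra_on_mono _ _ _ (fun B hB => or_introl hB) H2))).
      exact hA.
    + assert (sub : F `|` X `<=` F `|` \bigcup_(X in C) X).
      { intros B [hB|hB]; [left; exact hB|right; exists X; [exact CX|exact hB]]. }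
      apply (proj2 (proj2 (HC X CX) q1 q2 (ultra_on_mono _ _ _ sub H1) (ultra_on_mono _ _ _ sub H2))).
      right; exact hX.
Qed.

(* For maximal M, S := [ultra_on (F `|` M)] is a minimal closed subsemigroup (Ellis' argument):
   for u in S, S + u is a closed subsemigroup of S, hence equal to S; then {q in S | q + u = u}
   is a nonempty closed subsemigroup, hence all of S, and it contains u. *)
Section MaximalFamily.

Variables F M : set_system Z.
Hypothesis M_semigroup : closed_subsemigroup (F `|` M).
Hypothesis M_maximal : forall B, M `<` B -> ~ closed_subsemigroup (F `|` B).

Lemma maximal_absorbs (G : set_system Z) :
  (exists q, ultra_on (F `|` M) q /\ G `<=` q) ->
  (forall q1 q2, ultra_on (F `|` M) q1 -> G `<=` q1 ->
     ultra_on (F `|` M) q2 -> G `<=` q2 -> G `<=` uadd q1 q2) ->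
  G `<=` M.
Proof.
  intros [q [Hq Gq]] HG A GA. apply NNPP; intro nMA.
  apply (M_maximal (M `|` G)).
  - split; [intros B hB; left; exact hB|]. intros sub. exact (nMA (sub A (or_intror GA))).
  - assert (split_on : forall s, ultra_on (F `|` (M `|` G)) s <-> ultra_on (F `|` M) s /\ G `<=` s).
    { intros s. rewrite setUA. split.
      - intros Hs. split; [exact (ultra_on_mono _ _ _ (fun B hB => or_introl hB) Hs)|].
        intros B hB; exact (proj2 Hs B (or_intror hB)).
      - intros [[Us Hs] Gs]. split; [exact Us|]. intros B [hB|hB]; [exact (Hs B hB)|exact (Gs B hB)]. }
    split.
    + exists q. apply split_on. split; assumption.
    + intros q1 q2 Hq1 Hq2.
      destruct (proj1 (split_on q1) Hq1) as [H1 G1]. destruct (proj1 (split_on q2) Hq2) as [H2 G2].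
      apply split_on. split; [exact (proj2 M_semigroup q1 q2 H1 H2)|exact (HG q1 q2 H1 G1 H2 G2)].
Qed.

Lemma maximal_right_translates (u : set_system Z) : ultra_on (F `|` M) u ->
  forall q, ultra_on (F `|` M) q -> exists s, ultra_on (F `|` M) s /\ q = uadd s u.
Proof.
  intros Hu.
  set (G := fun A => forall s, ultra_on (F `|` M) s -> uadd s u A).
  assert (GM : G `<=` M).
  { apply maximal_absorbs.
    - exists (uadd u u). split; [exact (proj2 M_semigroup u u Hu Hu)|]. intros A GA; exact (GA u Hu).
    - intros q1 q2 H1 _ H2 G2 A GA.
      destruct (uadd_r_image (F `|` M) u q2 (proj1 Hu) (proj1 H2) G2) as [s [Hs ->]].
      rewrite <- uadd_assoc. exact (GA _ (proj2 M_semigroup q1 s H1 Hs)). }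
  intros q Hq. apply (uadd_r_image _ u q (proj1 Hu) (proj1 Hq)).
  intros A GA. apply (proj2 Hq). right. exact (GM A GA).
Qed.

Lemma maximal_idempotent (u : set_system Z) : ultra_on (F `|` M) u -> uadd u u = u.
Proof.
  intros Hu.
  set (V := fun A : set Z => exists2 C, u C & forall n, u (fun m => C (n + m)%Z) -> A n).
  assert (fixes : forall q, UltraFilter q -> V `<=` q -> uadd q u = u).
  { intros q Uq Vq. assert (Uqu := uadd_ultra q u Uq (proj1 Hu)).
    apply (@max_filter _ u (proj1 Hu)); [exact _|]. intros C uC. apply Vq. exists C; [exact uC|].
    intros n h; exact h. }
  assert (fixed : forall q, UltraFilter q -> uadd q u = u -> V `<=` q).
  { intros q Uq Eq A [C uC HC]. rewrite <- Eq in uC. exact (filterS (F := q) HC uC). }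
  assert (VM : V `<=` M).
  { apply maximal_absorbs.
    - destruct (maximal_right_translates u Hu u Hu) as [s [Hs Es]].
      exists s. split; [exact Hs|]. apply fixed; [exact (proj1 Hs)|symmetry; exact Es].
    - intros q1 q2 H1 V1 H2 V2. apply fixed; [exact (proj1 (proj2 M_semigroup q1 q2 H1 H2))|].
      rewrite uadd_assoc, (fixes q2 (proj1 H2) V2). exact (fixes q1 (proj1 H1) V1). }
  apply fixes; [exact (proj1 Hu)|]. intros A VA. apply (proj2 Hu). right. exact (VM A VA).
Qed.

End MaximalFamily.

Theorem closed_subsemigroup_idempotent (F : set_system Z) :
  closed_subsemigroup F -> exists u, ultra_on F u /\ uadd u u = u.
Proof.
  intros HF.
  destruct (Zorn_bigcup (P := fun M => closed_subsemigroup (F `|` M))) as [M [HM Mmax]].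
  { intros C CP Ctot. exact (closed_subsemigroup_chain F C HF CP Ctot). }
  destruct (proj1 HM) as [u Hu].
  exists u. split.
  - exact (ultra_on_mono _ _ _ (fun B hB => or_introl hB) Hu).
  - exact (maximal_idempotent F M HM Mmax u Hu).
Qed.

(* [ultra_on (left_ideal_family p)] is the closure of {n + p | n in Z}, i.e. the left ideal beta Z + p. *)
Definition left_ideal_family (p : set_system Z) : set_system Z :=
  fun A => forall n, p (fun m => A (n + m)%Z).

Lemma left_ideal_closed_subsemigroup (p : set_system Z) :
  UltraFilter p -> closed_subsemigroup (left_ideal_family p).
Proof.
  intros Up. split.
  - exists p. split; [exact Up|]. intros A hA. exact (hA 0%Z).
  - intros q1 q2 [U1 H1] [U2 H2]. split; [exact (uadd_ultra q1 q2 U1 U2)|].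
    intros A hA. unfold uadd.
    apply (filterS (F := q1) (P := setT)); [|apply filterT].
    intros n _. apply H2. intros k.
    apply (filterS (F := p) (P := fun m => A (n + k + m)%Z)); [|apply hA].
    intros m h. rewrite Z.add_assoc. exact h.
Qed.

Lemma left_ideal_decompose (p q : set_system Z) : UltraFilter p -> ultra_on (left_ideal_family p) q ->
  exists r, UltraFilter r /\ q = uadd r p.
Proof.
  intros Up [Uq Hq].
  destruct (uadd_r_image set0 p q Up Uq) as [r [[Ur _] Er]].
  - intros A HA. apply Hq. intros n.
    apply (principal_filterP n).
    exact (HA _ (conj (principal_filter_ultra n) (fun B hB => False_ind _ hB))).
  - exists r; split; assumption.
Qed.

Lemma left_ideal_idempotent (p : set_system Z) : UltraFilter p ->
  exists r u, UltraFilter r /\ UltraFilter u /\ u = uadd r p /\ uadd u u = u.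
Proof.
  intros Up.
  destruct (closed_subsemigroup_idempotent _ (left_ideal_closed_subsemigroup p Up)) as [u [Hu Iu]].
  destruct (left_ideal_decompose p u Up Hu) as [r [Ur Er]].
  exists r, u. exact (conj Ur (conj (proj1 Hu) (conj Er Iu))).
Qed.

(** * Distal systems: orbit closures are minimal *)

Section Iterates.

Variable X : System.

Lemma iterZ_of_nat (k : nat) (x : X) : iterZ X (Z.of_nat k) x = iterN X k x.
Proof. destruct k as [|k]; [reflexivity|]. simpl. rewrite SuccNat2Pos.id_succ. reflexivity. Qed.

Lemma iterZ_opp_of_nat (k : nat) (x : X) : iterZ X (- Z.of_nat k) x = Nat.iter k (Tinv X) x.
Proof. destruct k as [|k]; [reflexivity|]. simpl. rewrite SuccNat2Pos.id_succ. reflexivity. Qed.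

Lemma iterZ_succ (n : Z) (x : X) : iterZ X (Z.succ n) x = T X (iterZ X n x).
Proof.
  destruct (Z.le_gt_cases 0 n) as [hn|hn].
  - rewrite <- (Z2Nat.id n hn), <- Nat2Z.inj_succ, !iterZ_of_nat. reflexivity.
  - set (k := Z.to_nat (- n - 1)).
    replace n with (- Z.of_nat (S k))%Z by lia.
    replace (Z.succ (- Z.of_nat (S k))) with (- Z.of_nat k)%Z by lia.
    rewrite !iterZ_opp_of_nat. simpl. rewrite T_Tinv. reflexivity.
Qed.

Lemma iterZ_pred (n : Z) (x : X) : iterZ X (Z.pred n) x = Tinv X (iterZ X n x).
Proof. rewrite <- (Z.succ_pred n) at 2. rewrite iterZ_succ, Tinv_T. reflexivity. Qed.

Lemma iterZ_add (a b : Z) (x : X) : iterZ X (a + b) x = iterZ X a (iterZ X b x).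
Proof.
  revert x. induction a as [|a IH|a IH] using Z.peano_ind; intros x; [reflexivity| |].
  - replace (Z.succ a + b)%Z with (Z.succ (a + b)) by lia. rewrite !iterZ_succ, IH. reflexivity.
  - replace (Z.pred a + b)%Z with (Z.pred (a + b)) by lia. rewrite !iterZ_pred, IH. reflexivity.
Qed.

Lemma iterZ_continuous (n : Z) : Defs.continuous (iterZ X n).
Proof.
  induction n as [|n IH|n IH] using Z.peano_ind; intros x e he.
  - exists e; split; [exact he|]. intros y hy; exact hy.
  - destruct (T_cont X (iterZ X n x) e he) as [d1 [h1 H1]].
    destruct (IH x d1 h1) as [d2 [h2 H2]].
    exists d2; split; [exact h2|]. intros y hy. rewrite !iterZ_succ. exact (H1 _ (H2 y hy)).
  - destruct (Tinv_cont X (iterZ X n x) e he) as [d1 [h1 H1]].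
    destruct (IH x d1 h1) as [d2 [h2 H2]].
    exists d2; split; [exact h2|]. intros y hy. rewrite !iterZ_pred. exact (H1 _ (H2 y hy)).
Qed.

Lemma invariant_iterZ (A : X -> Prop) : (forall x, A x <-> A (T X x)) ->
  forall n x, A x -> A (iterZ X n x).
Proof.
  intros HA n. induction n as [|n IH|n IH] using Z.peano_ind; intros x Ax; [exact Ax| |].
  - rewrite iterZ_succ. exact (proj1 (HA _) (IH x Ax)).
  - rewrite iterZ_pred. apply (proj2 (HA _)). rewrite T_Tinv. exact (IH x Ax).
Qed.

Lemma ulim_uadd (p q : set_system Z) {Fp : Filter p} {Fq : Filter q} (y z w : X) :
  ulim q (fun m => iterZ X m y) z -> ulim p (fun n => iterZ X n z) w ->
  ulim (uadd p q) (fun k => iterZ X k y) w.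
Proof.
  intros Hq Hp e he. unfold uadd.
  apply (filterS (F := p) (P := fun n => mdist X (iterZ X n z) w < e / 2)); [|apply Hp; lra].
  intros n hn. destruct (iterZ_continuous n z (e / 2) ltac:(lra)) as [d [hd Hd]].
  apply (filterS (F := q) (P := fun m => mdist X (iterZ X m y) z < d)); [|apply Hq, hd].
  intros m hm. rewrite iterZ_add.
  assert (h := Hd (iterZ X m y) ltac:(rewrite Defs.dist_sym; exact hm)).
  pose proof (Defs.dist_tri X (iterZ X n (iterZ X m y)) (iterZ X n z) w).
  rewrite Defs.dist_sym in h. lra.
Qed.

Lemma distal_ulim_eq (p : set_system Z) {Pp : ProperFilter p} (x x' w : X) : distal X ->
  ulim p (fun n => iterZ X n x) w -> ulim p (fun n => iterZ X n x') w -> x = x'.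
Proof.
  intros D Hx Hx'. apply NNPP; intro hne. destruct (D x x' hne) as [eps [he Heps]].
  destruct (filter_meet p _ _ (Hx (eps / 2) ltac:(lra)) (Hx' (eps / 2) ltac:(lra))) as [n [h1 h2]].
  pose proof (Heps n). pose proof (Defs.dist_tri X (iterZ X n x) w (iterZ X n x')).
  rewrite (Defs.dist_sym X w) in H0. lra.
Qed.

(* The Ellis idempotent u = r + p is what forces the return: u-lim T^n x and x are proximal. *)
Lemma distal_ulim_return (x y : X) (p : set_system Z) : distal X -> UltraFilter p ->
  ulim p (fun n => iterZ X n x) y -> exists r, UltraFilter r /\ ulim r (fun n => iterZ X n y) x.
Proof.
  intros D Up Hy.
  destruct (left_ideal_idempotent p Up) as (r & u & Ur & Uu & Eu & Iu).
  destruct (ulim_exists r (fun n => iterZ X n y) (space_compact X) Ur) as [z Hz].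
  assert (Hxz : ulim u (fun n => iterZ X n x) z) by (rewrite Eu; exact (ulim_uadd r p x y z Hy Hz)).
  destruct (ulim_exists u (fun n => iterZ X n z) (space_compact X) Uu) as [z' Hz'].
  assert (Hxz' : ulim u (fun n => iterZ X n x) z')
    by (rewrite <- Iu; exact (ulim_uadd u u x z z' Hxz Hz')).
  assert (Ez : z' = z) by exact (ulim_unique u _ _ _ Hxz' Hxz). subst z'.
  assert (Ex : x = z) by exact (distal_ulim_eq u x z z D Hxz Hz'). subst z.
  exists r; split; assumption.
Qed.

Definition orbit_closure (x y : X) : Prop :=
  forall e, 0 < e -> exists n, mdist X (iterZ X n x) y < e.

Lemma distal_orbit_closure_sym (x y : X) : distal X -> orbit_closure x y -> orbit_closure y x.
Proof.
  intros D Hy. destruct (ulim_of_cluster (fun n => iterZ X n x) y Hy) as [p [Up Hp]].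
  destruct (distal_ulim_return x y p D Up Hp) as [r [Ur Hr]].
  intros e he. exact (filter_ex (F := r) (Hr e he)).
Qed.

End Iterates.

Lemma iterZ_intertwine (X Y : System) (f : X -> Y) : (forall x, f (T X x) = T Y (f x)) ->
  forall n x, f (iterZ X n x) = iterZ Y n (f x).
Proof.
  intros Hf. assert (Hinv : forall x, f (Tinv X x) = Tinv Y (f x)).
  { intros x. rewrite <- (T_Tinv X x) at 2. rewrite Hf, Tinv_T. reflexivity. }
  intros n. induction n as [|n IH|n IH] using Z.peano_ind; intros x; [reflexivity| |].
  - rewrite !iterZ_succ, Hf, IH. reflexivity.
  - rewrite !iterZ_pred, Hinv, IH. reflexivity.
Qed.

(** * Closed invariant subsystems *)

Section Subsystem.

Variables (X : System) (A : X -> Prop).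
Hypothesis A_closed : is_closed A.
Hypothesis A_invariant : forall x, A x <-> A (T X x).

Definition sub_space : MetricSpace.
Proof.
  refine {| carrier := {x | A x}; mdist := fun a b => mdist X (proj1_sig a) (proj1_sig b) |}.
  - intros a b; apply Defs.dist_nonneg.
  - intros a b; split; [intros h; apply sig_ext, Defs.dist_eq0, h|intros ->; apply Defs.dist_eq0; reflexivity].
  - intros a b; apply Defs.dist_sym.
  - intros a b c; apply Defs.dist_tri.
Defined.

Lemma sub_space_compact : Defs.compact sub_space.
Proof.
  apply compact_of_ulim. intros p Up.
  destruct (ulim_exists p (fun a : sub_space => proj1_sig a) (space_compact X) Up) as [c Hc].
  assert (Ac : A c).
  { apply (closed_of_approx A c A_closed). intros e he.
    destruct (filter_ex (F := p) (Hc e he)) as [a ha].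
    exists (proj1_sig a); split; [exact (proj2_sig a)|exact ha]. }
  exists (exist _ c Ac). exact Hc.
Qed.

Lemma sub_continuous (f : X -> X) (g : sub_space -> sub_space) : Defs.continuous f ->
  (forall a, proj1_sig (g a) = f (proj1_sig a)) -> Defs.continuous g.
Proof.
  intros Hf Hg a e he. destruct (Hf (proj1_sig a) e he) as [d [hd Hd]].
  exists d; split; [exact hd|]. intros b hb. simpl. rewrite !Hg. exact (Hd _ hb).
Qed.

Lemma invariant_Tinv (x : X) : A x -> A (Tinv X x).
Proof. intros Ax. apply (proj2 (A_invariant _)). rewrite T_Tinv. exact Ax. Qed.

Definition sub_T (a : sub_space) : sub_space :=
  exist _ (T X (proj1_sig a)) (proj1 (A_invariant _) (proj2_sig a)).

Definition sub_Tinv (a : sub_space) : sub_space :=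
  exist _ (Tinv X (proj1_sig a)) (invariant_Tinv _ (proj2_sig a)).

Definition subsystem : System.
Proof.
  refine {| space := sub_space; space_compact := sub_space_compact; T := sub_T; Tinv := sub_Tinv;
            T_cont := sub_continuous (T X) sub_T (T_cont X) (fun a => eq_refl);
            Tinv_cont := sub_continuous (Tinv X) sub_Tinv (Tinv_cont X) (fun a => eq_refl) |}.
  - intros a. apply sig_ext, T_Tinv.
  - intros a. apply sig_ext, Tinv_T.
Defined.

Lemma subsystem_dist (a b : subsystem) : mdist subsystem a b = mdist X (proj1_sig a) (proj1_sig b).
Proof. reflexivity. Qed.

Lemma subsystem_iterZ (n : Z) (a : subsystem) :
  proj1_sig (iterZ subsystem n a) = iterZ X n (proj1_sig a).
Proof. apply (iterZ_intertwine subsystem X (fun a => proj1_sig a)). reflexivity. Qed.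

Lemma subsystem_distal : distal X -> distal subsystem.
Proof.
  intros D a b hab. destruct (D (proj1_sig a) (proj1_sig b)) as [eps [he Heps]].
  { intros h; apply hab, sig_ext, h. }
  exists eps; split; [exact he|]. intros n.
  rewrite subsystem_dist, !subsystem_iterZ. apply Heps.
Qed.

End Subsystem.

Section OrbitClosure.

Variables (X : System) (x0 : X).

Lemma orbit_closure_closed : is_closed (orbit_closure X x0).
Proof.
  intros y ny.
  assert (far : exists e, 0 < e /\ forall n, e <= mdist X (iterZ X n x0) y).
  { apply NNPP; intro h. apply ny. intros e he. apply NNPP; intro h'. apply h.
    exists e. split; [exact he|]. intros n. apply Rnot_lt_le. intro hl. apply h'. exists n; exact hl. }
  destruct far as [e [he He]]. exists (e / 2). split; [lra|]. intros z hz Hz.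
  destruct (Hz (e / 2) ltac:(lra)) as [n hn].
  pose proof (He n). pose proof (Defs.dist_tri X (iterZ X n x0) z y).
  rewrite (Defs.dist_sym X z y) in H0. lra.
Qed.

Lemma orbit_closure_invariant (y : X) : orbit_closure X x0 y <-> orbit_closure X x0 (T X y).
Proof.
  split; intros Hy e he.
  - destruct (T_cont X y e he) as [d [hd Hd]]. destruct (Hy d hd) as [n hn].
    exists (Z.succ n). rewrite iterZ_succ, Defs.dist_sym.
    apply Hd. rewrite Defs.dist_sym; exact hn.
  - destruct (Tinv_cont X (T X y) e he) as [d [hd Hd]]. destruct (Hy d hd) as [n hn].
    exists (Z.pred n). rewrite iterZ_pred, Defs.dist_sym, <- (Tinv_T X y).
    apply Hd. rewrite Defs.dist_sym; exact hn.
Qed.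

Lemma orbit_closure_refl : orbit_closure X x0 x0.
Proof.
  intros e he. exists 0%Z. simpl. rewrite (proj2 (Defs.dist_eq0 X x0 x0) eq_refl). exact he.
Qed.

Definition orbit_closure_system : System :=
  subsystem X (orbit_closure X x0) orbit_closure_closed orbit_closure_invariant.

Definition orbit_base : orbit_closure_system := exist _ x0 orbit_closure_refl.

Lemma orbit_closure_distal : distal X -> distal orbit_closure_system.
Proof. apply subsystem_distal. Qed.

Lemma orbit_closure_minimal : distal X -> minimal orbit_closure_system.
Proof.
  unfold orbit_closure_system. intros D B B_closed B_invariant [a Ba].
  assert (Bbase : B orbit_base).
  { apply (closed_of_approx B orbit_base B_closed). intros e he.
    destruct (distal_orbit_closure_sym X x0 (proj1_sig a) D (proj2_sig a) e he) as [n hn].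
    exists (iterZ _ n a).
    split; [exact (invariant_iterZ _ B B_invariant n a Ba)|].
    rewrite subsystem_dist, subsystem_iterZ. exact hn. }
  intros z. apply (closed_of_approx B z B_closed). intros e he.
  destruct (proj2_sig z e he) as [n hn].
  exists (iterZ _ n orbit_base).
  split; [exact (invariant_iterZ _ B B_invariant n _ Bbase)|].
  unfold orbit_closure_system. rewrite subsystem_dist, subsystem_iterZ. exact hn.
Qed.

End OrbitClosure.

(** * The diagonal action on X^L *)

Section DiagonalPower.

Variables (X : System) (x0 : X) (L : nat).

Fixpoint tuple_dist (k : nat) (z z' : nat -> X) : R :=
  match k with
  | O => 0
  | S k' => Rmax (tuple_dist k' z z') (mdist X (z k') (z' k'))
  end.

Lemma tuple_dist_nonneg k z z' : 0 <= tuple_dist k z z'.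
Proof. induction k as [|k IH]; simpl; [lra|]. eapply Rle_trans; [exact IH|apply Rmax_l]. Qed.

Lemma tuple_dist_sym k z z' : tuple_dist k z z' = tuple_dist k z' z.
Proof. induction k as [|k IH]; simpl; [reflexivity|]. rewrite IH, Defs.dist_sym. reflexivity. Qed.

Lemma tuple_dist_tri k z y z' : tuple_dist k z z' <= tuple_dist k z y + tuple_dist k y z'.
Proof.
  induction k as [|k IH]; simpl; [lra|]. apply Rmax_lub.
  - pose proof (Rmax_l (tuple_dist k z y) (mdist X (z k) (y k))).
    pose proof (Rmax_l (tuple_dist k y z') (mdist X (y k) (z' k))). lra.
  - pose proof (Defs.dist_tri X (z k) (y k) (z' k)).
    pose proof (Rmax_r (tuple_dist k z y) (mdist X (z k) (y k))).
    pose proof (Rmax_r (tuple_dist k y z') (mdist X (y k) (z' k))). lra.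
Qed.

Lemma tuple_dist_refl k z : tuple_dist k z z = 0.
Proof.
  induction k as [|k IH]; simpl; [reflexivity|].
  rewrite IH, (proj2 (Defs.dist_eq0 X _ _) eq_refl). apply Rmax_left; lra.
Qed.

Lemma coord_le_tuple_dist k z z' j : (j < k)%nat -> mdist X (z j) (z' j) <= tuple_dist k z z'.
Proof.
  induction k as [|k IH]; intros h; [lia|]. simpl.
  destruct (Nat.eq_dec j k) as [->|ne]; [apply Rmax_r|].
  eapply Rle_trans; [apply IH; lia|apply Rmax_l].
Qed.

Lemma tuple_dist_lt k z z' e : 0 < e ->
  (forall j, (j < k)%nat -> mdist X (z j) (z' j) < e) -> tuple_dist k z z' < e.
Proof.
  induction k as [|k IH]; intros he h; simpl; [exact he|].
  apply Rmax_lub_lt; [apply IH; [exact he|intros j hj; apply h; lia]|apply h; lia].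
Qed.

(* Tuples are functions on nat padded with x0 beyond L, so that tuple_dist L separates points. *)
Definition padded (z : nat -> X) : Prop := forall j, (L <= j)%nat -> z j = x0.

Lemma padded_ext (z z' : nat -> X) : padded z -> padded z' ->
  (forall j, (j < L)%nat -> z j = z' j) -> z = z'.
Proof.
  intros Hz Hz' H. apply functional_extensionality; intro j.
  destruct (Nat.lt_ge_cases j L) as [hj|hj]; [exact (H j hj)|rewrite (Hz j hj), (Hz' j hj); reflexivity].
Qed.

Definition power_space : MetricSpace.
Proof.
  refine {| carrier := {z | padded z}; mdist := fun a b => tuple_dist L (proj1_sig a) (proj1_sig b) |}.
  - intros a b; apply tuple_dist_nonneg.
  - intros a b; split.
    + intros h. apply sig_ext, padded_ext; [exact (proj2_sig a)|exact (proj2_sig b)|].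
      intros j hj. apply Defs.dist_eq0.
      pose proof (coord_le_tuple_dist L (proj1_sig a) (proj1_sig b) j hj). pose proof (Defs.dist_nonneg X (proj1_sig a j) (proj1_sig b j)).
      lra.
    + intros ->. apply tuple_dist_refl.
  - intros a b; apply tuple_dist_sym.
  - intros a b c; apply tuple_dist_tri.
Defined.

Definition diag_shift (n : Z) (z : nat -> X) : nat -> X :=
  fun j => if Nat.ltb j L then iterZ X (Z.of_nat (S j) * n) (z j) else z j.

Lemma diag_shift_lt n z j : (j < L)%nat -> diag_shift n z j = iterZ X (Z.of_nat (S j) * n) (z j).
Proof. intros hj. unfold diag_shift. rewrite (proj2 (Nat.ltb_lt j L) hj). reflexivity. Qed.

Lemma diag_shift_padded n z : padded z -> padded (diag_shift n z).
Proof. intros Hz j hj. unfold diag_shift. rewrite (proj2 (Nat.ltb_ge j L) hj). exact (Hz j hj). Qed.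

Lemma diag_shift_add a b z : diag_shift a (diag_shift b z) = diag_shift (a + b) z.
Proof.
  apply functional_extensionality; intro j. unfold diag_shift.
  destruct (Nat.ltb j L); [|reflexivity]. rewrite <- iterZ_add. f_equal. lia.
Qed.

Lemma diag_shift_0 z : diag_shift 0 z = z.
Proof.
  apply functional_extensionality; intro j. unfold diag_shift.
  destruct (Nat.ltb j L); [|reflexivity]. rewrite Z.mul_0_r. reflexivity.
Qed.

Lemma diag_shift_continuous n z e : 0 < e -> exists d, 0 < d /\
  forall z', tuple_dist L z z' < d -> tuple_dist L (diag_shift n z) (diag_shift n z') < e.
Proof.
  intros he.
  assert (uniform : forall k, exists d, 0 < d /\ forall j y, (j < k)%nat -> mdist X (z j) y < d ->
            mdist X (iterZ X (Z.of_nat (S j) * n) (z j)) (iterZ X (Z.of_nat (S j) * n) y) < e).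
  { induction k as [|k [d1 [h1 H1]]].
    - exists 1; split; [lra|]. intros j y hj; lia.
    - destruct (iterZ_continuous X (Z.of_nat (S k) * n) (z k) e he) as [d2 [h2 H2]].
      exists (Rmin d1 d2); split; [apply Rmin_pos; assumption|]. intros j y hj hy.
      destruct (Nat.eq_dec j k) as [->|ne].
      + apply H2. pose proof (Rmin_r d1 d2); lra.
      + apply H1; [lia|]. pose proof (Rmin_l d1 d2); lra. }
  destruct (uniform L) as [d [hd Hd]]. exists d; split; [exact hd|].
  intros z' hz. apply tuple_dist_lt; [exact he|]. intros j hj. rewrite !diag_shift_lt by exact hj.
  apply Hd; [exact hj|]. pose proof (coord_le_tuple_dist L z z' j hj). lra.
Qed.

Definition power_shift (n : Z) (a : power_space) : power_space :=
  exist _ (diag_shift n (proj1_sig a)) (diag_shift_padded n _ (proj2_sig a)).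

Lemma power_shift_continuous n : Defs.continuous (power_shift n).
Proof.
  intros a e he. destruct (diag_shift_continuous n (proj1_sig a) e he) as [d [hd Hd]].
  exists d; split; [exact hd|]. intros b hb. exact (Hd _ hb).
Qed.

Lemma power_space_compact : Defs.compact power_space.
Proof.
  apply compact_of_ulim. intros p Up.
  destruct (functional_choice (fun j c => ulim p (fun a : power_space => proj1_sig a j) c))
    as [c Hc].
  { intros j. exact (ulim_exists p _ (space_compact X) Up). }
  assert (Pc : padded c).
  { intros j hj. symmetry. apply (ulim_unique p (fun a : power_space => proj1_sig a j)); [|exact (Hc j)].
    intros e he. apply (filterS (F := p) (P := setT)); [|apply filterT].
    intros a _. rewrite (proj2_sig a j hj), (proj2 (Defs.dist_eq0 X x0 x0) eq_refl). exact he. }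
  exists (exist _ c Pc). intros e he.
  assert (Hk : forall k, p (fun a : power_space => tuple_dist k (proj1_sig a) c < e)).
  { induction k as [|k IH]; simpl.
    - apply (filterS (F := p) (P := setT)); [intros a _; exact he|apply filterT].
    - apply (filterS (F := p) (P := _ `&` _) (fun a h => Rmax_lub_lt _ _ _ (proj1 h) (proj2 h))).
      exact (filterI IH (Hc k e he)). }
  exact (Hk L).
Qed.

Definition power_system : System.
Proof.
  refine {| space := power_space; space_compact := power_space_compact;
            T := power_shift 1; Tinv := power_shift (-1);
            T_cont := power_shift_continuous 1; Tinv_cont := power_shift_continuous (-1) |}.
  - intros a. apply sig_ext. simpl. rewrite diag_shift_add. apply diag_shift_0.
  - intros a. apply sig_ext. simpl. rewrite diag_shift_add. apply diag_shift_0.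
Defined.

Lemma power_iterZ (n : Z) (a : power_system) :
  proj1_sig (iterZ power_system n a) = diag_shift n (proj1_sig a).
Proof.
  induction n as [|n IH|n IH] using Z.peano_ind.
  - symmetry. apply diag_shift_0.
  - rewrite iterZ_succ. simpl. rewrite IH, diag_shift_add. f_equal. lia.
  - rewrite iterZ_pred. simpl. rewrite IH, diag_shift_add. f_equal. lia.
Qed.

Lemma power_distal : distal X -> distal power_system.
Proof.
  intros D a b hab.
  assert (Hj : exists j, (j < L)%nat /\ proj1_sig a j <> proj1_sig b j).
  { apply NNPP; intro h. apply hab, sig_ext, padded_ext; [exact (proj2_sig a)|exact (proj2_sig b)|].
    intros j hj. apply NNPP; intro hne. apply h. exists j. split; assumption. }
  destruct Hj as (j & hj & hne). destruct (D _ _ hne) as [eps [he Heps]].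
  exists eps; split; [exact he|]. intros n.
  change (eps <= tuple_dist L (proj1_sig (iterZ power_system n a)) (proj1_sig (iterZ power_system n b))).
  rewrite !power_iterZ. eapply Rle_trans; [|apply (coord_le_tuple_dist L _ _ j hj)].
  rewrite !diag_shift_lt by exact hj. apply Heps.
Qed.

Definition power_diag : power_system := exist padded (fun _ => x0) (fun _ _ => eq_refl).

Lemma max_ret_power_diag (n : nat) :
  max_ret X x0 n L = mdist power_system (iterZ power_system (Z.of_nat n) power_diag) power_diag.
Proof.
  change (max_ret X x0 n L =
    tuple_dist L (proj1_sig (iterZ power_system (Z.of_nat n) power_diag)) (fun _ => x0)).
  rewrite power_iterZ.
  assert (H : forall k, (k <= L)%nat ->
    max_ret X x0 n k = tuple_dist k (diag_shift (Z.of_nat n) (fun _ => x0)) (fun _ => x0)).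
  { induction k as [|k IH]; intros hk; [reflexivity|]. cbn [max_ret tuple_dist].
    rewrite IH by lia. rewrite diag_shift_lt by lia. rewrite <- Nat2Z.inj_mul, iterZ_of_nat.
    reflexivity. }
  exact (H L (le_n L)).
Qed.

End DiagonalPower.

Theorem mainTheorem5 (Rset : nat -> Prop) :
  (forall (Sy : System) (x : Sy), minimal Sy -> distal Sy ->
     inf_zero_on Rset (fun n => mdist Sy (iterN Sy n x) x)) ->
  forall (Sy : System) (x : Sy) (l : nat), minimal Sy -> distal Sy -> (1 <= l)%nat ->
     inf_zero_on Rset (fun n => max_ret Sy x n l).
Proof.
  intros Hrec X x l _ D _ e he.
  set (Y := orbit_closure_system (power_system X x l) (power_diag X x l)).
  assert (DY : distal Y) by exact (orbit_closure_distal _ _ (power_distal X x l D)).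
  assert (MY : minimal Y) by exact (orbit_closure_minimal _ _ (power_distal X x l D)).
  destruct (Hrec Y (orbit_base _ _) MY DY e he) as [n [Rn Hn]].
  exists n. split; [exact Rn|].
  rewrite <- iterZ_of_nat in Hn. unfold Y, orbit_closure_system in Hn.
  rewrite subsystem_dist, subsystem_iterZ in Hn.
  rewrite max_ret_power_diag. exact Hn.
Qed.
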